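(* Let $\alpha\colon\mathbb{R}\to\mathbb{R}$ be continuous, $\eta(w)=w+\frac{\alpha(w)}{2}$, and $S_\alpha=\bigcup_{w\in\mathbb{R}}[(-1,-\alpha(w),\eta(w)),(1,\alpha(w),\eta(w))]$. Then $S_\alpha$ is a graphical strip over $K$ if and only if $\frac{\alpha(w_2)-\alpha(w_1)}{w_2-w_1}\ge-2$ for all $w_1<w_2$ and $\eta(\mathbb{R})=\mathbb{R}$.
   Context: $\mathbb{H}$ is $\mathbb{R}^3$ with product $(x,y,z)\cdot(x',y',z')=(x+x',y+y',z+z'+\frac{xy'-yx'}{2})$; $Y^t=(0,t,0)$. A horizontal line is a set $\{p\cdot tv:t\in\mathbb{R}\}$, $v=(a,b,0)\neq0$; a ruled surface is a union of horizontal segments (rulings) with endpoints in its boundary. $V_0=\{(x,0,z)\}$; for $D\subset V_0$ and $f\colon D\to\mathbb{R}$, $\Gamma_f=\{u\cdot Y^{f(u)}:u\in D\}$. A graphical strip over $D$ is an intrinsic graph $\Gamma_f$ of a continuous $f\colon D\to\mathbb{R}$ which is ruled and all of whose rulings intersect the $z$-axis. $K=\{(x,0,z):-1\le x\le1\}$. $[p_1,p_2]$ is the line segment from $p_1$ to $p_2$. *)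

From HB Require Import structures.
From mathcomp Require Import all_boot all_order all_algebra.
From mathcomp Require Import all_classical all_reals all_analysis.
Set Implicit Arguments. Unset Strict Implicit. Unset Printing Implicit Defensive.
Import Order.TTheory GRing.Theory Num.Theory.
Import numFieldNormedType.Exports.
Local Open Scope classical_set_scope.
Local Open Scope ring_scope.

Section Heis.
Variable R : realType.

Definition pt := (R * R * R)%type.
Definition px (p : pt) : R := p.1.1.
Definition py (p : pt) : R := p.1.2.
Definition pz (p : pt) : R := p.2.

Definition hmul (p q : pt) : pt :=
  (px p + px q, py p + py q, pz p + pz q + (px p * py q - py p * px q) / 2).

Definition Yt (t : R) : pt := (0, t, 0).

Definition hline (p : pt) (a b : R) : set pt :=
  [set hmul p (t * a, t * b, 0) | t in [set: R]].

Definition horizontal_line (L : set pt) : Prop :=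
  exists p a b, (a != 0 \/ b != 0) /\ L = hline p a b.

Definition segment (p1 p2 : pt) : set pt :=
  [set ((1 - t) * px p1 + t * px p2, (1 - t) * py p1 + t * py p2,
        (1 - t) * pz p1 + t * pz p2) | t in `[0, 1]].

Definition horizontal_segment (p1 p2 : pt) : Prop :=
  p1 <> p2 /\ exists L, horizontal_line L /\ L p1 /\ L p2.

(* V_0 = {(x,0,z)} is identified with R*R via u = (x, z) *)
Definition V0pt (u : R * R) : pt := (u.1, 0, u.2).

Definition graph_pt (f : R * R -> R) (u : R * R) : pt := hmul (V0pt u) (Yt (f u)).

Definition igraph (D : set (R * R)) (f : R * R -> R) : set pt := graph_pt f @` D.

Definition bdry (D : set (R * R)) : set (R * R) := closure D `\` interior D.

Definition zaxis : set pt := [set p | px p = 0 /\ py p = 0].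

(* S is a graphical strip over D: S = Gamma_f for a continuous f : D -> R,
   and S is ruled (union of horizontal segments with endpoints in the
   boundary of Gamma_f, i.e. the image of the boundary of D), with all
   rulings meeting the z-axis. *)
Definition graphical_strip (D : set (R * R)) (S : set pt) : Prop :=
  exists f : R * R -> R,
    {within D, continuous f} /\ S = igraph D f /\
    exists Rul : set (pt * pt),
      (forall r, Rul r ->
         [/\ horizontal_segment r.1 r.2,
             (graph_pt f @` bdry D) r.1,
             (graph_pt f @` bdry D) r.2 &
             segment r.1 r.2 `&` zaxis !=set0]) /\
      S = \bigcup_(r in Rul) segment r.1 r.2.

Definition K : set (R * R) := [set u | -1 <= u.1 <= 1].

Definition eta_ (alpha : R -> R) (w : R) : R := w + alpha w / 2.

Definition S_alpha (alpha : R -> R) : set pt :=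
  \bigcup_(w in [set: R])
     segment (-1, - alpha w, eta_ alpha w) (1, alpha w, eta_ alpha w).

End Heis.

From HB Require Import structures.
From mathcomp Require Import all_boot all_order all_algebra.
From mathcomp Require Import all_classical all_reals all_analysis.
From mathcomp Require Import ring lra.
Set Implicit Arguments. Unset Strict Implicit. Unset Printing Implicit Defensive.
Import Order.TTheory GRing.Theory Num.Theory.
Import numFieldNormedType.Exports.
Local Open Scope classical_set_scope.
Local Open Scope ring_scope.

(** Projecting along the flow [Y^t] onto [V_0], the point [(x, x alpha(w), eta(w))]
    of the ruling through [w] lands on [(x, base_z alpha x w)], where
    [base_z alpha x w = x^2 w + (1 - x^2) (2 w + alpha(w)) / 2].  Hence [S_alpha] is an
    intrinsic graph over [K] exactly when each [base_z alpha x] is a bijection of [R].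
    For [x = 0] this is [eta], which must therefore be onto; and if the slope of [alpha]
    dropped below [-2] on [[w1, w2]], some [x] in [(0, 1)] would put two distinct points
    of the rulings through [w1] and [w2] over the same point of [V_0].  Conversely, the
    slope bound makes [w |-> 2 w + alpha(w)] nondecreasing, so every [base_z alpha x] is
    nondecreasing, strictly so for [x <> 0], and onto by the intermediate value theorem;
    the graph function is [f(x, z) = x alpha(w)] with [base_z alpha x w = z].  It is
    continuous off [x = 0] as a composite with the inverse of a strictly monotone map, and
    at [x = 0] because [alpha(w)] stays bounded there.  The rulings end at [x = -1, 1] on
    the boundary of [K] and cross the [z]-axis at [(0, 0, eta(w))]. *)

Lemma nondecreasing_of_slope_ge (R : realFieldType) (g : R -> R) (c : R) :
  (forall w1 w2, w1 < w2 -> - c <= (g w2 - g w1) / (w2 - w1)) ->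
  {homo (fun w => c * w + g w) : w1 w2 / w1 <= w2}.
Proof.
move=> slope w1 w2; rewrite le_eqVlt => /predU1P[-> //|lt12].
by have := slope _ _ lt12; rewrite ler_pdivlMr ?subr_gt0 //; lra.
Qed.

Lemma IVT_sign (R : realType) (g : R -> R) (a b y : R) :
  continuous g -> (g a - y) * (g b - y) <= 0 -> exists c, g c = y.
Proof.
wlog ab : a b / a <= b => [hwlog|] gc sgn.
  case: (leP a b) => [|/ltW] ab; first exact: hwlog ab gc sgn.
  by apply: (hwlog b a); rewrite // mulrC.
have between : Num.min (g a) (g b) <= y <= Num.max (g a) (g b).
  by rewrite ge_min le_max; case: (lerP (g a) y); case: (lerP (g b) y) => /=; nra.
by have [c _ gcy] := IVT ab (continuous_subspaceT gc) between; exists c.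
Qed.

Lemma cvg0_mulr_bounded {T : Type} (F : set_system T) {FF : Filter F}
    (R : realFieldType) (f g : T -> R) (M : R) :
  f @ F --> 0 -> (\forall t \near F, `|g t| <= M) -> (f \* g) @ F --> 0.
Proof.
move=> f0 gM; apply/cvgr0Pnorm_lt => e e0.
have M1 : 0 < `|M| + 1 by rewrite ltr_wpDl.
near=> t; rewrite normrM.
have ft : `|f t| < e / (`|M| + 1) by near: t; apply: cvgr0_norm_lt => //; rewrite divr_gt0.
have gtM : `|g t| <= M by near: t.
have gt : `|g t| <= `|M| + 1 by have := ler_norm M; lra.
rewrite ltr_pdivlMr // in ft.
by apply: le_lt_trans ft; rewrite ler_wpM2l.
Unshelve. all: by end_near.
Qed.

Section IntrinsicGraphs.
Variable R : realType.
Implicit Types (f : R * R -> R) (D : set (R * R)) (p q : pt R) (u : R * R).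

Definition v0proj p : R * R := (px p, pz p - px p * py p / 2).

Lemma graph_ptE f u : graph_pt f u = (u.1, f u, u.2 + u.1 * f u / 2).
Proof. by rewrite /graph_pt /hmul /V0pt /Yt /px /py /pz /=; congr (_, _, _); ring. Qed.

Lemma v0proj_graph_pt f u : v0proj (graph_pt f u) = u.
Proof. by case: u => x z; rewrite graph_ptE /v0proj /px /py /pz /=; congr (_, _); ring. Qed.

Lemma igraph_v0proj_inj D f p q :
  igraph D f p -> igraph D f q -> v0proj p = v0proj q -> p = q.
Proof. by move=> [u _ <-] [v _ <-]; rewrite !v0proj_graph_pt => ->. Qed.

Lemma bdry_K x z : `|x| = 1 -> bdry (@K R) (x, z).
Proof.
move=> x1; have Kxz : K (x, z) by rewrite /K /= -ler_norml x1.
split; first exact: subset_closure.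
move=> /nbhs_ballP[e /= e0 /(_ (x * (1 + e / 2), z))].
have /[swap]/[apply] : ball (x, z) e (x * (1 + e / 2), z).
  split; rewrite /ball /= ?subrr ?normr0 //.
  have -> : x - x * (1 + e / 2) = x * (- (e / 2)) by ring.
  by rewrite normrM x1 mul1r normrN gtr0_norm; lra.
by rewrite /K /= -ler_norml normrM x1 mul1r ger0_norm; lra.
Qed.

End IntrinsicGraphs.

Section Rulings.
Variable R : realType.
Implicit Types (alpha : R -> R) (a e x w : R) (p : pt R).

Lemma segment_rulingP a e p :
  segment (-1, - a, e) (1, a, e) p <-> exists2 x, -1 <= x <= 1 & p = (x, x * a, e).
Proof.
split.
- case=> t; rewrite /= in_itv /= => /andP[t0 t1] <-.
  exists (2 * t - 1); first (apply/andP; split; lra).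
  by rewrite /px /py /pz /=; congr (_, _, _); ring.
- case=> x /andP[x0 x1] ->; exists ((x + 1) / 2).
    by rewrite /= in_itv /=; apply/andP; split; lra.
  by rewrite /px /py /pz /=; congr (_, _, _); field.
Qed.

Lemma S_alphaP alpha p : S_alpha alpha p <->
  exists w x, -1 <= x <= 1 /\ p = (x, x * alpha w, eta_ alpha w).
Proof.
split; first by case=> w _ /segment_rulingP[x Kx ->]; exists w, x.
by case=> w [x [Kx ->]]; exists w => //; apply/segment_rulingP; exists x.
Qed.

Lemma ruling_horizontal a e : horizontal_segment (-1, - a, e) (1, a, e).
Proof.
split; first by case; lra.
exists (hline (0, 0, e) 1 a); split.
  by exists (0, 0, e), 1, a; split => //; left; exact: oner_neq0.
by split; [exists (-1) | exists 1] => //;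
  rewrite /hmul /px /py /pz /=; congr (_, _, _); ring.
Qed.

Lemma ruling_meets_zaxis a e : segment (-1, - a, e) (1, a, e) `&` @zaxis R !=set0.
Proof.
exists (0, 0, e); split; last by [].
by apply/segment_rulingP; exists 0; rewrite ?mul0r //; apply/andP; split; lra.
Qed.

Definition base_z alpha x w := w + (1 - x ^+ 2) / 2 * alpha w.

Lemma v0proj_ruling alpha x w :
  v0proj (x, x * alpha w, eta_ alpha w) = (x, base_z alpha x w).
Proof. by rewrite /v0proj /px /py /pz /eta_ /base_z /=; congr (_, _); ring. Qed.

End Rulings.

Section Necessity.
Variables (R : realType) (alpha : R -> R) (f : R * R -> R).
Hypothesis S_alpha_graph : S_alpha alpha = igraph (@K R) f.

Lemma eta_surj_of_graph z : exists w, eta_ alpha w = z.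
Proof.
have K0z : K (0, z) by rewrite /K /=; apply/andP; split; lra.
have /S_alphaP[w [x [_]]] : S_alpha alpha (graph_pt f (0, z)).
  by rewrite S_alpha_graph; exists (0, z).
by rewrite graph_ptE /= => -[_ _ e]; exists w; rewrite -e !mul0r addr0.
Qed.

Lemma alpha_eq_of_base_z_eq (x w1 w2 : R) : x != 0 -> -1 <= x <= 1 ->
  base_z alpha x w1 = base_z alpha x w2 -> alpha w1 = alpha w2.
Proof.
move=> x0 Kx eq_base.
have inS w : igraph (@K R) f (x, x * alpha w, eta_ alpha w).
  by rewrite -S_alpha_graph; apply/S_alphaP; exists w, x.
have := igraph_v0proj_inj (inS w1) (inS w2).
by rewrite !v0proj_ruling eq_base => /(_ erefl) [/(mulfI x0)].
Qed.

Lemma slope_ge_of_graph w1 w2 :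
  w1 < w2 -> -2 <= (alpha w2 - alpha w1) / (w2 - w1).
Proof.
move=> lt12; rewrite ler_pdivlMr ?subr_gt0 //; rewrite leNgt; apply/negP => steep.
set d := alpha w1 - alpha w2.
have d0 : 0 < d by rewrite /d; lra.
set r := 2 * (w2 - w1) / d.
have r0 : 0 < r by rewrite divr_gt0 //; lra.
have r1 : r < 1 by rewrite ltr_pdivrMr // mul1r /d; lra.
(* [x] puts the rulings through [w1] and [w2] over the same point of [V_0]. *)
set x := Num.sqrt (1 - r).
have x2 : x ^+ 2 = 1 - r by rewrite sqr_sqrtr //; lra.
have x0 : 0 < x by rewrite sqrtr_gt0; lra.
have Kx : -1 <= x <= 1.
  apply/andP; split; first lra.
  by rewrite -(ler_pXn2r (_ : 0 < 2)%N) ?nnegrE ?ltW // x2 expr1n; lra.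
suff : alpha w1 = alpha w2 by rewrite -/d; lra.
apply: (alpha_eq_of_base_z_eq (lt0r_neq0 x0) Kx).
by rewrite /base_z x2 /r /d; field; rewrite gt_eqF.
Qed.

End Necessity.

Section Sufficiency.
Variables (R : realType) (alpha : R -> R).
Hypotheses (alpha_cont : continuous alpha)
  (shift_nondecr : {homo (fun w => 2 * w + alpha w) : w1 w2 / w1 <= w2})
  (eta_surj : forall z, exists w, eta_ alpha w = z).
Implicit Types (x z w : R) (u : R * R).

Lemma base_zE x w :
  base_z alpha x w = x ^+ 2 * w + (1 - x ^+ 2) / 2 * (2 * w + alpha w).
Proof. by rewrite /base_z; field. Qed.

Lemma base_z0 w : base_z alpha 0 w = eta_ alpha w.
Proof. by rewrite /base_z /eta_ expr0n subr0 mul1r mulrC. Qed.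

Lemma base_z_norm1 x w : `|x| = 1 -> base_z alpha x w = w.
Proof.
by move=> x1; rewrite /base_z -real_normK ?num_real // x1 expr1n subrr !mul0r addr0.
Qed.

Lemma base_z_homo x : -1 <= x <= 1 -> {homo base_z alpha x : w1 w2 / w1 <= w2}.
Proof.
move=> Kx w1 w2 le12; have := shift_nondecr le12; rewrite !base_zE /=.
have x2 : 0 <= x ^+ 2 <= 1 by rewrite sqr_ge0 expr2; case/andP: Kx; nra.
nra.
Qed.

Lemma base_z_mono x :
  x != 0 -> -1 <= x <= 1 -> {mono base_z alpha x : w1 w2 / w1 <= w2}.
Proof.
move=> x0 Kx; apply: le_mono => w1 w2 lt12; have := shift_nondecr (ltW lt12).
rewrite !base_zE /=.
have x2 : 0 < x ^+ 2 <= 1 by rewrite exprn_even_gt0 //= expr2; case/andP: Kx; nra.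
nra.
Qed.

Lemma continuous_base_z x : continuous (base_z alpha x).
Proof.
by move=> w; apply: cvgD; [exact: cvg_id | apply: cvgM; [exact: cvg_cst | exact: alpha_cont]].
Qed.

Lemma base_z_surj x z : -1 <= x <= 1 -> exists w, base_z alpha x w = z.
Proof.
move=> Kx; have [w <-] := eta_surj z.
have same_sign : 0 <= alpha w * alpha (eta_ alpha w).
  case: (lerP 0 (alpha w)) => aw.
    have /shift_nondecr : w <= eta_ alpha w by rewrite /eta_; lra.
    by rewrite /eta_ /=; nra.
  have /shift_nondecr : eta_ alpha w <= w by rewrite /eta_; lra.
  by rewrite /eta_ /=; nra.
have x2 : 0 <= x ^+ 2 <= 1 by rewrite sqr_ge0 expr2; case/andP: Kx; nra.
apply: (@IVT_sign _ (base_z alpha x) w (eta_ alpha w)); first exact: continuous_base_z.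
have -> : (base_z alpha x w - eta_ alpha w) *
          (base_z alpha x (eta_ alpha w) - eta_ alpha w) =
          - (x ^+ 2 * (1 - x ^+ 2) * (alpha w * alpha (eta_ alpha w)) / 4).
  by rewrite /base_z {1 3 5}/eta_; field.
case/andP: x2 => x2_ge0 x2_le1.
by rewrite oppr_le0 divr_ge0 // mulr_ge0 // mulr_ge0 // subr_ge0.
Qed.

Definition base_inv x z := xget 0 [set w | base_z alpha x w = z].

Lemma base_invK x z : -1 <= x <= 1 -> base_z alpha x (base_inv x z) = z.
Proof. by move=> Kx; exact: (xgetPex 0 (base_z_surj z Kx)). Qed.

Lemma base_zK x w : x != 0 -> -1 <= x <= 1 -> base_inv x (base_z alpha x w) = w.
Proof. by move=> x0 Kx; apply: (inc_inj (base_z_mono x0 Kx)); rewrite base_invK. Qed.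

Definition strip_fun u := u.1 * alpha (base_inv u.1 u.2).

Lemma graph_pt_strip_fun u : K u -> graph_pt strip_fun u =
  (u.1, u.1 * alpha (base_inv u.1 u.2), eta_ alpha (base_inv u.1 u.2)).
Proof.
move=> Ku; rewrite graph_ptE /strip_fun; congr (_, _, _).
by rewrite -{1}(base_invK u.2 Ku) /base_z /eta_; field.
Qed.

Lemma graph_pt_strip_fun_base_z x w : -1 <= x <= 1 ->
  graph_pt strip_fun (x, base_z alpha x w) = (x, x * alpha w, eta_ alpha w).
Proof.
move=> Kx; rewrite graph_pt_strip_fun //=.
have [x0 | x0] := eqVneq x 0; last by rewrite base_zK.
by rewrite x0 !mul0r -!base_z0 base_invK // -x0.
Qed.

Lemma S_alpha_igraph : S_alpha alpha = igraph (@K R) strip_fun.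
Proof.
apply/seteqP; split => p.
  case/S_alphaP => w [x [Kx ->]]; exists (x, base_z alpha x w) => //.
  exact: graph_pt_strip_fun_base_z.
case=> u Ku <-; rewrite graph_pt_strip_fun //.
by apply/S_alphaP; exists (base_inv u.1 u.2), u.1.
Qed.

Lemma near_base_inv x0 z0 a b :
  base_z alpha x0 a < z0 < base_z alpha x0 b ->
  \forall v \near (x0, z0), K v -> a < base_inv v.1 v.2 < b.
Proof.
move=> /andP[a_lt b_gt].
have cvg_gap c : (fun v : R * R => base_z alpha v.1 c - v.2) @ (x0, z0) -->
                 base_z alpha x0 c - z0.
  apply: cvgB; last exact: cvg_snd.
  apply: cvgD; first exact: cvg_cst.
  apply: cvgM; last exact: cvg_cst.
  apply: cvgM; last exact: cvg_cst.
  apply: cvgB; first exact: cvg_cst.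
  exact: (cvgM cvg_fst cvg_fst).
near=> v => Kv.
have gap_a : base_z alpha v.1 a - v.2 < 0.
  by near: v; apply: (cvgr_lt _ (cvg_gap a)); lra.
have gap_b : 0 < base_z alpha v.1 b - v.2.
  by near: v; apply: (cvgr_gt _ (cvg_gap b)); lra.
have := base_invK v.2 Kv; have := @base_z_homo _ Kv.
by move=> homo inv; apply/andP; split; rewrite ltNge; apply/negP => /homo; lra.
Unshelve. all: by end_near.
Qed.

Lemma cvg_base_inv x0 z0 : x0 != 0 -> K (x0, z0) ->
  (fun v : R * R => base_inv v.1 v.2) @ within (@K R) (nbhs (x0, z0)) -->
  base_inv x0 z0.
Proof.
move=> x0_neq0 Kx0; apply/cvgrPdist_lt => e e0; rewrite near_withinE.
have lt_base := leW_mono (base_z_mono x0_neq0 Kx0).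
apply: filterS (near_base_inv (a := base_inv x0 z0 - e) (b := base_inv x0 z0 + e) _).
  by move=> v near_v Kv; rewrite ltr_distlC near_v.
by rewrite -{2 3}(base_invK z0 Kx0) !lt_base; lra.
Qed.

Lemma norm_alpha_le_between w1 w2 w : w1 <= w <= w2 ->
  `|alpha w| <= `|alpha w1| + `|alpha w2| + 2 * (w2 - w1).
Proof.
move=> /andP[le1 le2]; have /= := shift_nondecr le1; have /= := shift_nondecr le2.
have := ler_norm (alpha w2); have := ler_norm (- alpha w1); rewrite normrN.
have := normr_ge0 (alpha w1); have := normr_ge0 (alpha w2).
by rewrite ler_norml; move=> *; apply/andP; split; lra.
Qed.

Lemma continuous_strip_fun : {within @K R, continuous strip_fun}.
Proof.
apply/subspace_continuousP => -[x0 z0] Kx0.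
have cvg_x : fst @ within (@K R) (nbhs (x0, z0)) --> x0.
  by apply: cvg_within_filter; exact: cvg_fst.
have [x0_eq0 | x0_neq0] := eqVneq x0 0; last first.
  apply: (@cvgM _ _ _ _ fst (fun v => alpha (base_inv v.1 v.2))) => //.
  by apply: cvg_comp; [exact: cvg_base_inv | exact: alpha_cont].
(* [base_inv] may jump at [x = 0], but [alpha] stays bounded along it. *)
subst x0; rewrite /from_subspace /strip_fun mul0r.
have [w1 eta_w1] := eta_surj (z0 - 1); have [w2 eta_w2] := eta_surj (z0 + 1).
have W_between : \forall v \near (0, z0), K v -> w1 < base_inv v.1 v.2 < w2.
  by apply: near_base_inv; rewrite !base_z0 eta_w1 eta_w2; apply/andP; split; lra.
apply: (@cvg0_mulr_bounded _ _ _ _ fst (fun v => alpha (base_inv v.1 v.2))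
  (`|alpha w1| + `|alpha w2| + 2 * (w2 - w1))) => //.
rewrite near_withinE; apply: filterS W_between => v W_v Kv.
by apply: norm_alpha_le_between; case/andP: (W_v Kv) => /ltW -> /ltW ->.
Qed.

Lemma S_alpha_graphical_strip : graphical_strip (@K R) (S_alpha alpha).
Proof.
exists strip_fun; split; first exact: continuous_strip_fun.
split; first exact: S_alpha_igraph.
exists (range (fun w => ((-1, - alpha w, eta_ alpha w), (1, alpha w, eta_ alpha w)))).
split; last by rewrite bigcup_image.
move=> _ [w _ <-] /=; split; [exact: ruling_horizontal | | | exact: ruling_meets_zaxis].
- exists (-1, w); first by apply: bdry_K; rewrite normrN normr1.
  have Km1 : @K R (-1, w) by rewrite /K /= -ler_norml normrN normr1.
  have := graph_pt_strip_fun_base_z w Km1.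
  by rewrite base_z_norm1 ?normrN ?normr1 // mulN1r.
- exists (1, w); first by apply: bdry_K; rewrite normr1.
  have K1 : @K R (1, w) by rewrite /K /= -ler_norml normr1.
  have := graph_pt_strip_fun_base_z w K1.
  by rewrite base_z_norm1 ?normr1 // mul1r.
Qed.

End Sufficiency.

Theorem lemma3p1 (R : realType) (alpha : R -> R) (halpha : continuous alpha) :
  graphical_strip (@K R) (S_alpha alpha) <->
  ((forall w1 w2 : R, w1 < w2 -> -2 <= (alpha w2 - alpha w1) / (w2 - w1)) /\
   (forall z : R, exists w : R, eta_ alpha w = z)).
Proof.
split.
  case=> f [_ [S_graph _]].
  by split; [exact: slope_ge_of_graph S_graph | exact: eta_surj_of_graph S_graph].
case=> slope eta_surj; apply: S_alpha_graphical_strip => //.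
exact: nondecreasing_of_slope_ge.
Qed.
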